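(* Let $n\ge1$ and $g\in\mathcal G_n$. Then there are exactly $2^n$ uphills from $1$ to $g$, exactly $2^n$ downhills from $g$ to $1$, and exactly $2^{2n}$ mountains with peak $g$.
   Context: Let $X$ be a nonempty set and $X'=\{x':x\in X\}$ a disjoint copy of $X$; let $1$ be a new symbol and $A=X\cup X'\cup\{1\}$ (the anchors), with the involution $1'=1$, $(x)'=x'$, $(x')'=x$ for $x\in X$. For a 5-tuple $g$ write $g=(g^l,g^{la},g^c,g^{ra},g^r)$ (left entry, left anchor, middle entry, right anchor, right entry); the notation iterates, e.g. for $s\in\{l,r\}$, $g^{ls}$ is the $s$-entry of $g^l$ and $g^{lsa}$ is the $s$-anchor of $g^l$. Define $\mathcal G_0=\{1\}$; $\mathcal G_{1,e}=\{g_{xx'}:x\in X\}$ where $g_{xx'}=(1,1,xx',x',1)$ (the middle entry is a formal symbol), and $\mathcal G_{1,d}=\emptyset$. For $i\ge 2$: $\mathcal G_{i,e}=\{(g,(g^{la})',g^l,(g^{ra})',g),\ (g,(g^{ra})',g^l,(g^{la})',g) : g\in\mathcal G_{i-1,e}\}$, and $\mathcal G_{i,d}$ is the set of all $g\in\mathcal G_{i-1}\times A\times\mathcal G_{i-2}\times A\times\mathcal G_{i-1}$ such that $g^l\neq g^r$, $(g^c,g^{la})=(g^{ls},(g^{lsa})')$ for some $s\in\{l,r\}$, and $(g^c,g^{ra})=(g^{rt},(g^{rta})')$ for some $t\in\{l,r\}$; here $\mathcal G_i=\mathcal G_{i,d}\cup\mathcal G_{i,e}$ for $i\ge1$. Put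 $\mathcal G^5=\bigcup_{i\ge1}\mathcal G_i$, $\mathcal G=\mathcal G^5\cup A$, $\mathcal G'=\mathcal G^5\cup\{1\}$ (the symbol $1$ is used both as an anchor and as a letter of $\mathcal G'$). The height of $g\in\mathcal G_i$ is $i$; $1$ has height $0$. Words are elements of the free semigroup $\mathcal G^+$. A triplet $g_1ag_2$ with $g_1,g_2\in\mathcal G'$, $a\in A$ is left anchored if $g_2\in\mathcal G^5$ and $(g_1,a)=(g_2^s,g_2^{sa})$ for some $s\in\{l,r\}$, and right anchored if $g_1\in\mathcal G^5$ and $(g_2,a)=(g_1^s,(g_1^{sa})')$ for some $s\in\{l,r\}$; it is anchored if it is left or right anchored. An uphill from $h$ to $g$ is a word $g_0a_1g_1\cdots a_mg_m$ ($g_i\in\mathcal G'$, $a_i\in A$) with $g_0=h$, $g_m=g$, each $g_{i-1}a_ig_i$ anchored and height$(g_i)=$height$(g_{i-1})+1$ for all $i$; a downhill from $g$ to $h$ is defined the same way with height$(g_i)=$height$(g_{i-1})-1$. A mountain with peak $g$ (for $g\in\mathcal G^5$) is a word $u*v$ where $u$ is an uphill from $1$ to $g$ and $v$ is a downhill from $g$ to $1$, and $u*v$ denotes the concatenation of $u$ and $v$ with the common letter $g$ written only once. *)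

From Stdlib Require Import List Arith.
Import ListNotations.
Set Implicit Arguments.

Section Mountains.
Variable X : Type.

Inductive anchor : Type := AOne | AX (x : X) | AX' (x : X).

Definition ainv (a : anchor) : anchor :=
  match a with AOne => AOne | AX x => AX' x | AX' x => AX x end.

(* Raw terms: the symbol 1, the formal middle symbols xx', and 5-tuples
   (left entry, left anchor, middle entry, right anchor, right entry). *)
Inductive term : Type :=
| One
| Sym (x : X)                    (* the formal symbol xx' *)
| Tup (l : term) (la : anchor) (c : term) (ra : anchor) (r : term).

Definition gxx (x : X) : term := Tup One AOne (Sym x) (AX' x) One.

Definition side (s : bool) (t : term) : option (term * anchor) :=
  match t with
  | Tup l la _ ra r => Some (if s then (l, la) else (r, ra))
  | _ => None
  end.

Fixpoint Ge (i : nat) : term -> Prop :=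
  match i with
  | 0 => fun _ => False
  | S i' =>
    match i' with
    | 0 => fun t => exists x, t = gxx x
    | S _ => fun t => exists l la c ra r,
        Ge i' (Tup l la c ra r) /\
        (t = Tup (Tup l la c ra r) (ainv la) l (ainv ra) (Tup l la c ra r) \/
         t = Tup (Tup l la c ra r) (ainv ra) l (ainv la) (Tup l la c ra r))
    end
  end.

Fixpoint Gall (i : nat) : term -> Prop :=
  match i with
  | 0 => fun t => t = One
  | S i' =>
    match i' with
    | 0 => fun t => exists x, t = gxx x
    | S k => fun t =>
        Ge i t \/
        (exists l la c ra r, t = Tup l la c ra r /\
           Gall i' l /\ Gall k c /\ Gall i' r /\ l <> r /\
           (exists s e b, side s l = Some (e, b) /\ c = e /\ la = ainv b) /\
           (exists s e b, side s r = Some (e, b) /\ c = e /\ ra = ainv b))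
    end
  end.

Definition inG5 (t : term) : Prop := exists i, 1 <= i /\ Gall i t.
Definition inGp (t : term) : Prop := t = One \/ inG5 t.

Definition heightSucc (a b : term) : Prop := exists j, Gall j a /\ Gall (S j) b.

Definition leftAnchored (g1 : term) (a : anchor) (g2 : term) : Prop :=
  inG5 g2 /\ exists s, side s g2 = Some (g1, a).
Definition rightAnchored (g1 : term) (a : anchor) (g2 : term) : Prop :=
  inG5 g1 /\ exists s e b, side s g1 = Some (e, b) /\ g2 = e /\ a = ainv b.
Definition anchored g1 a g2 : Prop := leftAnchored g1 a g2 \/ rightAnchored g1 a g2.

(* Letters of G = G^5 ∪ A; the letter 1 of G' is the anchor 1. *)
Inductive letter : Type := LA (a : anchor) | LT (t : term).

Definition encG (t : term) : letter :=
  match t with One => LA AOne | _ => LT t end.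

(* the word g0 a1 g1 ... am gm *)
Definition wordOf (g0 : term) (st : list (anchor * term)) : list letter :=
  encG g0 :: flat_map (fun p => [LA (fst p); encG (snd p)]) st.

Definition lastT (g0 : term) (st : list (anchor * term)) : term :=
  snd (last st (AOne, g0)).

Fixpoint chainOK (up : bool) (prev : term) (st : list (anchor * term)) : Prop :=
  match st with
  | [] => True
  | (a, t) :: st' =>
      inGp t /\ anchored prev a t /\
      (if up then heightSucc prev t else heightSucc t prev) /\
      chainOK up t st'
  end.

Definition isHill (up : bool) (h g : term) (w : list letter) : Prop :=
  exists g0 st, w = wordOf g0 st /\ g0 = h /\ inGp g0 /\
                lastT g0 st = g /\ chainOK up g0 st.

Definition isUphill := isHill true.
Definition isDownhill := isHill false.

(* u * v : concatenation with the common letter g written once *)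
Definition isMountain (g : term) (w : list letter) : Prop :=
  inG5 g /\ exists u v, isUphill One g u /\ isDownhill g One v /\ w = u ++ tl v.

Definition hasCard (P : list letter -> Prop) (k : nat) : Prop :=
  exists l : list (list letter), NoDup l /\ length l = k /\ forall w, In w l <-> P w.

End Mountains.

From Stdlib Require Import List Arith Lia.
Import ListNotations.
Set Implicit Arguments.
Unset Strict Implicit.

(* Every g in G_{m+1} is a 5-tuple whose two outer entries g^l, g^r lie in G_m,
   and whose two sides (g^l, g^{la}) and (g^r, g^{ra}) are distinct: for
   g in G_{i,d} the entries differ, for g in G_{i,e} the anchors do.  Heights
   are unique (the height of a term is the depth of its left spine), so an
   entry of g can never be the higher letter of an anchored triplet.  Hence the
   last step of an uphill into g is "side s of g, then its anchor, then g", and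
   dually the first step of a downhill from g descends to a side of g with the
   inverted anchor.  This gives the recursions
       #up(g) = #up(g^l) + #up(g^r),   #down(g) = #down(g^l) + #down(g^r),
   the unions being disjoint because the two sides of g differ; so both counts
   are 2^n.  A mountain u*v is determined by the pair (u, v) since all uphills
   to g have the same length 2n+1, which yields (2^n)^2 mountains. *)

Lemma app_inv_length {A : Type} (u u' x x' : list A) :
  length u = length u' -> u ++ x = u' ++ x' -> u = u'.
Proof.
  revert u'. induction u as [|a u IH]; intros [|a' u'] Hlen E; try discriminate; auto.
  injection E as -> E. f_equal. apply (IH u'); auto.
Qed.

Lemma NoDup_flat_map_app {A : Type} (L L' : list (list A)) (f : list A -> list A) :
  NoDup L -> NoDup L' ->
  (forall u u', In u L -> In u' L -> length u = length u') ->
  (forall v v', In v L' -> In v' L' -> f v = f v' -> v = v') ->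
  NoDup (flat_map (fun u => map (fun v => u ++ f v) L') L).
Proof.
  intros HL HL' Hlen Hf. induction HL as [|u L Hu HL IH]; simpl; [constructor|].
  apply NoDup_app.
  - apply NoDup_map_NoDup_ForallPairs; [|exact HL'].
    intros v v' Hv Hv' E. apply Hf; auto. eapply app_inv_head; exact E.
  - apply IH. intros; apply Hlen; right; assumption.
  - intros w Hw Hw'. apply in_map_iff in Hw as (v & <- & _).
    apply in_flat_map in Hw' as (u' & Hu' & Hw'). apply in_map_iff in Hw' as (v' & E & _).
    apply app_inv_length in E; [subst; contradiction|]. apply Hlen; simpl; auto.
Qed.

Section Mountains.
Variable X : Type.
Notation T := (term X).
Notation word := (list (letter X)).

Lemma hasCard_ext (P Q : word -> Prop) k :
  (forall w, P w <-> Q w) -> hasCard P k -> hasCard Q k.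
Proof.
  intros HPQ (L & HL & Hlen & Hmem). exists L. split; [exact HL|]. split; [exact Hlen|].
  intro w. rewrite Hmem. apply HPQ.
Qed.

Lemma hasCard_single (w0 : word) : hasCard (fun w => w = w0) 1.
Proof.
  exists [w0]. split; [constructor; [intros []|constructor]|]. split; [reflexivity|].
  intro w. simpl. split; [intros [<-|[]]; reflexivity | intros ->; left; reflexivity].
Qed.

Lemma hasCard_disjoint_images (P Q R : word -> Prop) (f f' : word -> word) k k' :
  hasCard P k -> hasCard Q k' ->
  (forall u v, f u = f v -> u = v) -> (forall u v, f' u = f' v -> u = v) ->
  (forall u v, P u -> Q v -> f u <> f' v) ->
  (forall w, R w <-> (exists u, P u /\ w = f u) \/ (exists v, Q v /\ w = f' v)) ->
  hasCard R (k + k').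
Proof.
  intros (L & HL & <- & Hmem) (L' & HL' & <- & Hmem') Hf Hf' Hdisj HR.
  exists (map f L ++ map f' L'). split; [|split].
  - apply NoDup_app.
    + apply NoDup_map_NoDup_ForallPairs; [intros u v _ _; apply Hf | exact HL].
    + apply NoDup_map_NoDup_ForallPairs; [intros u v _ _; apply Hf' | exact HL'].
    + intros w Hw Hw'. apply in_map_iff in Hw as (u & <- & Hu), Hw' as (v & E & Hv).
      apply (Hdisj u v); [apply Hmem; exact Hu | apply Hmem'; exact Hv | symmetry; exact E].
  - rewrite length_app, !length_map. reflexivity.
  - intro w. rewrite HR, in_app_iff, !in_map_iff. split.
    + intros [(u & <- & Hu) | (v & <- & Hv)];
        [left; exists u | right; exists v]; split; auto; [apply Hmem | apply Hmem']; assumption.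
    + intros [(u & Hu & ->) | (v & Hv & ->)];
        [left; exists u | right; exists v]; split; auto; [apply Hmem | apply Hmem']; assumption.
Qed.

Lemma hasCard_concat (P Q : word -> Prop) (f : word -> word) k k' :
  hasCard P k -> hasCard Q k' ->
  (forall u u', P u -> P u' -> length u = length u') ->
  (forall v v', Q v -> Q v' -> f v = f v' -> v = v') ->
  hasCard (fun w => exists u v, P u /\ Q v /\ w = u ++ f v) (k * k').
Proof.
  intros (L & HL & <- & Hmem) (L' & HL' & <- & Hmem') Hlen Hf.
  exists (flat_map (fun u => map (fun v => u ++ f v) L') L). split; [|split].
  - apply NoDup_flat_map_app; auto.
    + intros u u' Hu Hu'. apply Hlen; apply Hmem; assumption.
    + intros v v' Hv Hv'. apply Hf; apply Hmem'; assumption.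
  - apply flat_map_constant_length. intros u _. apply length_map.
  - intro w. rewrite in_flat_map. split.
    + intros (u & Hu & Hw). apply in_map_iff in Hw as (v & <- & Hv).
      exists u, v. rewrite <- Hmem, <- Hmem'. auto.
    + intros (u & v & Hu & Hv & ->). exists u. split; [apply Hmem; exact Hu|].
      apply in_map_iff. exists v. split; [reflexivity | apply Hmem'; exact Hv].
Qed.


Lemma ainv_inj (a b : anchor X) : ainv a = ainv b -> a = b.
Proof. destruct a, b; simpl; congruence. Qed.

(* The two anchors of an element of G_{i,e} differ; this keeps apart the two
   hills through its (equal) outer entries. *)
Lemma Ge_anchors_distinct i (l : T) la c ra r : Ge (S i) (Tup l la c ra r) -> la <> ra.
Proof.
  revert l la c ra r. induction i as [|i IH]; intros l la c ra r H.
  - destruct H as [x H]. injection H as -> -> -> -> ->. discriminate.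
  - destruct H as (l' & la' & c' & ra' & r' & HG & [H | H]);
      injection H as -> -> -> -> ->; apply IH in HG; intro E; apply ainv_inj in E; congruence.
Qed.

Lemma Ge_Gall i (t : T) : Ge (S i) t -> Gall (S i) t.
Proof. destruct i; intro H; [exact H | left; exact H]. Qed.

Lemma Gall_succ i (g : T) : Gall (S i) g ->
  exists l la c ra r, g = Tup l la c ra r /\ Gall i l /\ Gall i r /\ (l, la) <> (r, ra).
Proof.
  destruct i as [|k]; intro H.
  - destruct H as [x ->]. exists (One X), (AOne X), (Sym x), (AX' x), (One X).
    repeat split; congruence.
  - destruct H as [H | H].
    + destruct H as (l & la & c & ra & r & HG & [-> | ->]);
        (eexists _, _, l, _, _; split; [reflexivity|]);
        (split; [apply Ge_Gall; exact HG|]); (split; [apply Ge_Gall; exact HG|]);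
        apply Ge_anchors_distinct in HG; intro E;
        apply (f_equal snd) in E; simpl in E; apply ainv_inj in E; congruence.
    + destruct H as (l & la & c & ra & r & -> & Hl & _ & Hr & Hne & _).
      exists l, la, c, ra, r. repeat split; auto. congruence.
Qed.

Fixpoint height (t : T) : nat :=
  match t with Tup l _ _ _ _ => S (height l) | _ => 0 end.

Lemma Gall_height i (t : T) : Gall i t -> height t = i.
Proof.
  revert t. induction i as [|i IH]; intros t H.
  - simpl in H. subst. reflexivity.
  - destruct (Gall_succ H) as (l & la & c & ra & r & -> & Hl & _). simpl. rewrite (IH _ Hl). reflexivity.
Qed.

Lemma Gall_unique i j (t : T) : Gall i t -> Gall j t -> i = j.
Proof. intros Hi Hj. rewrite <- (Gall_height Hi), <- (Gall_height Hj). reflexivity. Qed.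

Lemma Gall_inGp i (t : T) : Gall i t -> inGp t.
Proof. destruct i; intro H; [left; exact H | right; exists (S i); split; [lia | exact H]]. Qed.

Lemma side_Gall j (p e : T) s b : Gall j p -> side s p = Some (e, b) ->
  exists j', j = S j' /\ Gall j' e.
Proof.
  intros Hp Hs. destruct j as [|j].
  - simpl in Hp. subst. discriminate.
  - exists j. split; [reflexivity|]. destruct (Gall_succ Hp) as (l & la & c & ra & r & -> & Hl & Hr & _).
    destruct s; simpl in Hs; injection Hs as <- <-; assumption.
Qed.

Lemma side_height j k (p e : T) s b :
  Gall j p -> side s p = Some (e, b) -> Gall k e -> j = S k.
Proof.
  intros Hp Hs He. destruct (side_Gall Hp Hs) as (j' & -> & He'). f_equal. exact (Gall_unique He' He).
Qed.

(* A step h a g of an uphill into g in G_{m+1} is exactly a side (h, a) of g: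
   the triplet cannot be right anchored, as g would then be an entry of h. *)
Lemma up_step m (h g : T) a : Gall (S m) g ->
  (inGp g /\ anchored h a g /\ heightSucc h g) <-> exists s, side s g = Some (h, a).
Proof.
  intro Hg. split.
  - intros (_ & [[_ Hs] | [_ (s & e & b & Hs & -> & _)]] & (j & Hh & Hg')); [exact Hs|].
    exfalso. pose proof (side_height Hh Hs Hg'). lia.
  - intros [s Hs]. destruct (side_Gall Hg Hs) as (j & Ej & Hh). injection Ej as <-.
    split; [exact (Gall_inGp Hg)|]. split.
    + left. split; [exists (S m); split; [lia | exact Hg] | exists s; exact Hs].
    + exists m. split; assumption.
Qed.

Lemma down_step m (g h : T) a : Gall (S m) g ->
  (inGp h /\ anchored g a h /\ heightSucc h g) <->
  exists s b, side s g = Some (h, b) /\ a = ainv b.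
Proof.
  intro Hg. split.
  - intros (_ & [[_ (s & Hs)] | [_ (s & e & b & Hs & -> & Ha)]] & (j & Hh & Hg')).
    + exfalso. pose proof (side_height Hh Hs Hg'). lia.
    + exists s, b. auto.
  - intros (s & b & Hs & ->). destruct (side_Gall Hg Hs) as (j & Ej & Hh). injection Ej as <-.
    split; [exact (Gall_inGp Hh)|]. split.
    + right. split; [exists (S m); split; [lia | exact Hg]|]. exists s, h, b. auto.
    + exists m. split; assumption.
Qed.


Lemma encG_inj (s t : T) : encG s = encG t -> s = t.
Proof. destruct s, t; simpl; congruence. Qed.

Lemma lastT_cons (g0 : T) a t st : lastT g0 ((a, t) :: st) = lastT t st.
Proof.
  revert g0 a t. induction st as [|[a' t'] st IH]; intros g0 a t; [reflexivity|].
  change (lastT g0 ((a', t') :: st) = lastT t ((a', t') :: st)). rewrite !IH. reflexivity.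
Qed.

Lemma lastT_snoc (g0 : T) st a t : lastT g0 (st ++ [(a, t)]) = t.
Proof. unfold lastT. rewrite last_last. reflexivity. Qed.

Lemma wordOf_snoc (g0 : T) st a t :
  wordOf g0 (st ++ [(a, t)]) = wordOf g0 st ++ [LA a; encG t].
Proof. unfold wordOf. rewrite flat_map_app. reflexivity. Qed.

Lemma wordOf_length (g0 : T) st : length (wordOf g0 st) = S (2 * length st).
Proof.
  induction st as [|p st IH]; [reflexivity|].
  unfold wordOf in *. simpl in *. lia.
Qed.

Lemma wordOf_last (g0 : T) st : exists w, wordOf g0 st = w ++ [encG (lastT g0 st)].
Proof.
  induction st as [|[a t] st [w Hw]] using rev_ind; [exists []; reflexivity|].
  exists (wordOf g0 st ++ [LA a]). rewrite wordOf_snoc, lastT_snoc, <- app_assoc. reflexivity.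
Qed.

Lemma chainOK_snoc up (prev : T) st a t :
  chainOK up prev (st ++ [(a, t)]) <->
  chainOK up prev st /\ inGp t /\ anchored (lastT prev st) a t /\
  (if up then heightSucc (lastT prev st) t else heightSucc t (lastT prev st)).
Proof.
  revert prev. induction st as [|[a' t'] st IH]; intro prev.
  - simpl. unfold lastT. simpl. tauto.
  - simpl. rewrite IH, lastT_cons. tauto.
Qed.

Lemma chain_up_height (g0 : T) st j :
  chainOK true g0 st -> Gall j g0 -> Gall (j + length st) (lastT g0 st).
Proof.
  revert g0 j. induction st as [|[a t] st IH]; intros g0 j Hch Hg0.
  - rewrite Nat.add_0_r. exact Hg0.
  - destruct Hch as (_ & _ & (j' & Hj' & Ht) & Hch).
    rewrite lastT_cons. simpl. rewrite <- Nat.add_succ_comm.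
    apply IH; [exact Hch|]. rewrite (Gall_unique Hg0 Hj'). exact Ht.
Qed.

Lemma hill_head up (h g : T) w : isHill up h g w -> exists w', w = encG h :: w'.
Proof. intros (g0 & st & -> & -> & _). eexists. reflexivity. Qed.

Lemma hill_last up (h g : T) w : isHill up h g w -> exists w', w = w' ++ [encG g].
Proof. intros (g0 & st & -> & _ & _ & <- & _). apply wordOf_last. Qed.

Lemma uphill_length m (g : T) w : isUphill (One X) g w -> Gall m g -> length w = S (2 * m).
Proof.
  intros (g0 & st & -> & -> & _ & Hlast & Hch) Hg.
  pose proof (chain_up_height Hch (eq_refl : Gall 0 (One X))) as H. rewrite Hlast in H. simpl in H.
  rewrite wordOf_length, (Gall_unique H Hg). reflexivity.
Qed.


Lemma uphill_One (w : word) : isUphill (One X) (One X) w <-> w = [encG (One X)].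
Proof.
  split.
  - intros (g0 & st & -> & -> & _ & Hlast & Hch).
    pose proof (chain_up_height Hch (eq_refl : Gall 0 (One X))) as H. rewrite Hlast in H.
    apply Gall_height in H. destruct st; [reflexivity | discriminate].
  - intros ->. exists (One X), []. repeat split. left. reflexivity.
Qed.

Lemma uphill_succ m (g : T) w : Gall (S m) g ->
  isUphill (One X) g w <->
  exists s h a u, side s g = Some (h, a) /\ isUphill (One X) h u /\ w = u ++ [LA a; encG g].
Proof.
  intro Hg. split.
  - intros (g0 & st & -> & -> & _ & Hlast & Hch).
    induction st as [|[a t] st _] using rev_ind.
    + unfold lastT in Hlast. simpl in Hlast. subst. apply Gall_height in Hg. discriminate.
    + rewrite lastT_snoc in Hlast. subst t.
      apply chainOK_snoc in Hch as (Hch & Hstep). apply (up_step _ _ Hg) in Hstep as [s Hs].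
      exists s, (lastT (One X) st), a, (wordOf (One X) st). split; [exact Hs|].
      split; [exists (One X), st; repeat split; auto; left; reflexivity|].
      apply wordOf_snoc.
  - intros (s & h & a & u & Hs & (g0 & st & -> & -> & Hin & Hlast & Hch) & ->).
    exists (One X), (st ++ [(a, g)]). rewrite wordOf_snoc, lastT_snoc.
    repeat split; auto. apply chainOK_snoc. split; [exact Hch|].
    rewrite Hlast. apply (up_step _ _ Hg). exists s. exact Hs.
Qed.

Lemma downhill_One (w : word) : isDownhill (One X) (One X) w <-> w = [encG (One X)].
Proof.
  split.
  - intros (g0 & st & -> & -> & _ & Hlast & Hch). destruct st as [|[a t] st]; [reflexivity|].
    destruct Hch as (_ & _ & (j & _ & Hj) & _). apply Gall_height in Hj. discriminate.
  - intros ->. exists (One X), []. repeat split. left. reflexivity.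
Qed.

Lemma downhill_succ m (g : T) w : Gall (S m) g ->
  isDownhill g (One X) w <->
  exists s h b u, side s g = Some (h, b) /\ isDownhill h (One X) u /\
                  w = encG g :: LA (ainv b) :: u.
Proof.
  intro Hg. split.
  - intros (g0 & st & -> & -> & _ & Hlast & Hch). destruct st as [|[a t] st].
    + unfold lastT in Hlast. simpl in Hlast. subst. apply Gall_height in Hg. discriminate.
    + rewrite lastT_cons in Hlast. destruct Hch as (Ht & Han & Hhs & Hch).
      destruct (proj1 (down_step t a Hg) (conj Ht (conj Han Hhs))) as (s & b & Hs & ->).
      exists s, t, b, (wordOf t st). split; [exact Hs|].
      split; [exists t, st; repeat split; assumption | reflexivity].
  - intros (s & h & b & u & Hs & (g0 & st & -> & -> & Hin & Hlast & Hch) & ->).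
    exists g, ((ainv b, h) :: st). rewrite lastT_cons.
    assert (Hstep : inGp h /\ anchored g (ainv b) h /\ heightSucc h g)
      by (apply (down_step h (ainv b) Hg); exists s, b; auto).
    repeat split; auto; [exact (Gall_inGp Hg) | apply Hstep | apply Hstep].
Qed.


Lemma uphill_count m (g : T) : Gall m g -> hasCard (isUphill (One X) g) (2 ^ m).
Proof.
  revert g. induction m as [|m IH]; intros g Hg.
  - simpl in Hg. subst g. eapply hasCard_ext; [|apply hasCard_single].
    intro w. symmetry. apply uphill_One.
  - destruct (Gall_succ Hg) as (l & la & c & ra & r & Eg & Hl & Hr & Hsides).
    replace (2 ^ S m) with (2 ^ m + 2 ^ m) by (simpl; lia).
    apply (hasCard_disjoint_images (f := fun u => u ++ [LA la; encG g])
             (f' := fun u => u ++ [LA ra; encG g]) (IH _ Hl) (IH _ Hr)).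
    + intros u v. apply app_inv_tail.
    + intros u v. apply app_inv_tail.
    + (* the two families differ in the last anchor or in the entry before it *)
      intros u v Hu Hv E. apply Hsides.
      assert (Huv : u = v).
      { eapply app_inv_length; [|exact E].
        rewrite (uphill_length Hu Hl), (uphill_length Hv Hr). reflexivity. }
      subst v. apply app_inv_head in E. injection E as ->.
      destruct (hill_last Hu) as (u1 & Hu1), (hill_last Hv) as (u2 & Hu2).
      rewrite Hu1 in Hu2. apply app_inj_tail in Hu2 as [_ El].
      rewrite (encG_inj El). reflexivity.
    + intro w. rewrite (uphill_succ _ Hg). subst g. split.
      * intros (s & h & a & u & Hs & Hu & ->).
        destruct s; injection Hs as <- <-; [left | right]; exists u; auto.
      * intros [(u & Hu & ->) | (u & Hu & ->)];
          [exists true, l, la, u | exists false, r, ra, u]; auto.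
Qed.

Lemma downhill_count m (g : T) : Gall m g -> hasCard (isDownhill g (One X)) (2 ^ m).
Proof.
  revert g. induction m as [|m IH]; intros g Hg.
  - simpl in Hg. subst g. eapply hasCard_ext; [|apply hasCard_single].
    intro w. symmetry. apply downhill_One.
  - destruct (Gall_succ Hg) as (l & la & c & ra & r & Eg & Hl & Hr & Hsides).
    replace (2 ^ S m) with (2 ^ m + 2 ^ m) by (simpl; lia).
    apply (hasCard_disjoint_images (f := fun u => encG g :: LA (ainv la) :: u)
             (f' := fun u => encG g :: LA (ainv ra) :: u) (IH _ Hl) (IH _ Hr)).
    + intros u v E. injection E as E. exact E.
    + intros u v E. injection E as E. exact E.
    + (* the two families differ in the second anchor or in the letter after it *)
      intros u v Hu Hv E. apply Hsides.
      injection E as Ea <-. apply ainv_inj in Ea as ->.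
      destruct (hill_head Hu) as (u1 & Hu1), (hill_head Hv) as (u2 & Hu2).
      rewrite Hu1 in Hu2. injection Hu2 as El _.
      rewrite (encG_inj El). reflexivity.
    + intro w. rewrite (downhill_succ _ Hg). subst g. split.
      * intros (s & h & b & u & Hs & Hu & ->).
        destruct s; injection Hs as <- <-; [left | right]; exists u; auto.
      * intros [(u & Hu & ->) | (u & Hu & ->)];
          [exists true, l, la, u | exists false, r, ra, u]; auto.
Qed.

End Mountains.

Theorem lemma4p3 (X : Type) (HX : inhabited X) (n : nat) (g : term X) :
  1 <= n -> Gall n g ->
  hasCard (@isUphill X (One X) g) (2 ^ n) /\
  hasCard (@isDownhill X g (One X)) (2 ^ n) /\
  hasCard (@isMountain X g) (2 ^ (2 * n)).
Proof.
  intros Hn Hg.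
  pose proof (uphill_count Hg) as Hup. pose proof (downhill_count Hg) as Hdown.
  split; [exact Hup|]. split; [exact Hdown|].
  replace (2 ^ (2 * n)) with (2 ^ n * 2 ^ n) by (rewrite <- Nat.pow_add_r; f_equal; lia).
  apply (hasCard_ext (P := fun w => exists u v,
            isUphill (One X) g u /\ isDownhill g (One X) v /\ w = u ++ tl v)).
  { intro w. unfold isMountain. split; [intro Hw; split; [exists n; auto | exact Hw] | tauto]. }
  apply hasCard_concat; [exact Hup | exact Hdown | |].
  -
    intros u u' Hu Hu'. rewrite (uphill_length Hu Hg), (uphill_length Hu' Hg). reflexivity.
  - (* all downhills from g start with the letter g *)
    intros v v' Hv Hv' E.
    destruct (hill_head Hv) as (w & ->), (hill_head Hv') as (w' & ->).
    simpl in E. subst. reflexivity.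
Qed.
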